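(* The map $\rho:HC_F(\mathbf v,d)\to Z(\mathbf v,d)$, $\rho([u,y_1,y_2,r_1,r_2])=[u,y_1,y_2]$, is surjective. Moreover, if $\mathbf v_1=(v_{11},v_{12})$, $\mathbf v_2=(v_{21},v_{22})$ are real vectors and $d\in\mathbb{R}$, then $\rho$ restricts to a surjective map $HC_F(\mathbf v,d)(\mathbb{R})\to Z(\mathbf v,d)(\mathbb{R})$.
   Context: Parameters $[\mathbf v,d]=[v_{11},v_{12},v_{21},v_{22},d]\in\mathbb{C}P^4$ (not all zero). On $\mathbb{C}P^4$ with coordinates $[u,y_1,y_2,r_1,r_2]$, let $L_1=v_{11}(u-y_1)-v_{12}y_2$, $L_2=-v_{21}(u+y_1)-v_{22}y_2$, $f_1=(u-y_1)^2+y_2^2$, $f_2=(u+y_1)^2+y_2^2$, and let $HC_F(\mathbf v,d)$ be the set of points with $f_1=r_1^2$, $f_2=r_2^2$ and $L_2r_1-L_1r_2-dr_1r_2=0$. Let $Z(\mathbf v,d)\subset\mathbb{C}P^2$ (coordinates $[u,y_1,y_2]$) be the zero set of $h=(L_2^2f_1+L_1^2f_2-d^2f_1f_2)^2-4L_1^2L_2^2f_1f_2$. For a variety defined by real polynomials, its set of real points $(\mathbb{R})$ consists of its points having a representative with all homogeneous coordinates real. *)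

From HB Require Import structures.
From mathcomp Require Import all_boot all_order all_algebra.
Set Implicit Arguments. Unset Strict Implicit. Unset Printing Implicit Defensive.
Import Order.TTheory GRing.Theory Num.Theory.
Local Open Scope ring_scope.

(* The ground field: an algebraically closed numeric field C (e.g. the complex
   numbers); its "real" elements are those with  x \is Num.real. *)

Section HC.
Variable C : numClosedFieldType.
Variables v11 v12 v21 v22 d : C.

Definition L1 (u y1 y2 : C) : C := v11 * (u - y1) - v12 * y2.
Definition L2 (u y1 y2 : C) : C := - v21 * (u + y1) - v22 * y2.
Definition f1 (u y1 y2 : C) : C := (u - y1) ^+ 2 + y2 ^+ 2.
Definition f2 (u y1 y2 : C) : C := (u + y1) ^+ 2 + y2 ^+ 2.

(* A representative (u,y1,y2,r1,r2) (nonzero) of a point of HC_F(v,d) in CP^4. *)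
Definition HC_F (u y1 y2 r1 r2 : C) : Prop :=
  [/\ ~ [/\ u = 0, y1 = 0, y2 = 0, r1 = 0 & r2 = 0],
      f1 u y1 y2 = r1 ^+ 2,
      f2 u y1 y2 = r2 ^+ 2 &
      L2 u y1 y2 * r1 - L1 u y1 y2 * r2 - d * r1 * r2 = 0].

Definition hZ (u y1 y2 : C) : C :=
  (L2 u y1 y2 ^+ 2 * f1 u y1 y2 + L1 u y1 y2 ^+ 2 * f2 u y1 y2
     - d ^+ 2 * f1 u y1 y2 * f2 u y1 y2) ^+ 2
  - 4 * L1 u y1 y2 ^+ 2 * L2 u y1 y2 ^+ 2 * f1 u y1 y2 * f2 u y1 y2.

(* A representative (u,y1,y2) (nonzero) of a point of Z(v,d) in CP^2. *)
Definition Zset (u y1 y2 : C) : Prop :=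
  ~ [/\ u = 0, y1 = 0 & y2 = 0] /\ hZ u y1 y2 = 0.
End HC.

Definition real_point3 (C : numClosedFieldType) (u y1 y2 : C) : Prop :=
  exists mu : C, mu != 0 /\
    [/\ mu * u \is Num.real, mu * y1 \is Num.real & mu * y2 \is Num.real].

From HB Require Import structures.
From mathcomp Require Import all_boot all_order all_algebra.
From mathcomp Require Import ring.
Set Implicit Arguments. Unset Strict Implicit. Unset Printing Implicit Defensive.
Import Order.TTheory GRing.Theory Num.Theory.
Local Open Scope ring_scope.

(** Put [A = L2], [B = L1], [p = f1], [q = f2], so that [h = R(A, B, d, p, q)]
    with [R] the resultant below.  Whenever [p = x^2] and [q = y^2], [R] is the
    product of the four conjugates [P(±x, ±y)] of [P(x, y) = A x - B y - d x y],
    and [P(r1, r2) = 0] is the third equation of [HC_F].  Hence [rho] maps into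
    [Z], and over a point of [Z] one of the four sign choices
    [r_i = ±sqrt(f_i)] lies on [HC_F].  At a real point [f_i >= 0], so these
    lifts are real, whatever the coefficients [v] and [d]. *)

Section SignConjugates.
Variable R : comPzRingType.
Implicit Types A B d x y p q : R.

Definition hc_form A B d x y : R := A * x - B * y - d * x * y.

Definition hc_resultant A B d p q : R :=
  (A ^+ 2 * p + B ^+ 2 * q - d ^+ 2 * p * q) ^+ 2 - 4 * B ^+ 2 * A ^+ 2 * p * q.

Lemma hc_resultant_sqr A B d x y :
  hc_resultant A B d (x ^+ 2) (y ^+ 2) =
  hc_form A B d x y * hc_form A B d (- x) (- y) *
  hc_form A B d (- x) y * hc_form A B d x (- y).
Proof. rewrite /hc_resultant /hc_form; ring. Qed.

End SignConjugates.

Section SignRoots.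
Variable R : idomainType.
Implicit Types A B d x y : R.

Lemma hc_resultant_sqr_eq0 A B d x y :
  (hc_resultant A B d (x ^+ 2) (y ^+ 2) == 0) =
  [|| hc_form A B d x y == 0, hc_form A B d (- x) (- y) == 0,
      hc_form A B d (- x) y == 0 | hc_form A B d x (- y) == 0].
Proof. by rewrite hc_resultant_sqr !mulf_eq0 -!orbA. Qed.

Lemma hc_resultant_sqr_eq0_sign A B d x y :
  hc_resultant A B d (x ^+ 2) (y ^+ 2) = 0 ->
  exists b1 b2 : bool,
    hc_form A B d ((-1) ^+ b1 * x) ((-1) ^+ b2 * y) = 0.
Proof.
move/eqP; rewrite hc_resultant_sqr_eq0 => /or4P[] /eqP root.
- by exists false, false; rewrite !mul1r.
- by exists true, true; rewrite !mulN1r.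
- by exists true, false; rewrite mulN1r mul1r.
- by exists false, true; rewrite mulN1r mul1r.
Qed.

End SignRoots.

Section Projection.
Variable C : numClosedFieldType.
Variables v11 v12 v21 v22 d : C.
Implicit Types u l : C.

Local Notation L1 := (L1 v11 v12).
Local Notation L2 := (L2 v21 v22).
Local Notation HC_F := (HC_F v11 v12 v21 v22 d).
Local Notation Zset := (Zset v11 v12 v21 v22 d).
Local Notation hZ := (hZ v11 v12 v21 v22 d).

Lemma hZ_hc_resultant u y1 y2 :
  hZ u y1 y2 = hc_resultant (L2 u y1 y2) (L1 u y1 y2) d (f1 u y1 y2) (f2 u y1 y2).
Proof. by []. Qed.

Lemma hZ_scale l u y1 y2 :
  hZ (l * u) (l * y1) (l * y2) = l ^+ 8 * hZ u y1 y2.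
Proof. rewrite /hZ /L1 /L2 /f1 /f2; ring. Qed.

Lemma f1_eq0 u y1 y2 : [/\ u = 0, y1 = 0 & y2 = 0] -> f1 u y1 y2 = 0.
Proof. by case=> -> -> ->; rewrite /f1 subr0 expr0n addr0. Qed.

Lemma f2_eq0 u y1 y2 : [/\ u = 0, y1 = 0 & y2 = 0] -> f2 u y1 y2 = 0.
Proof. by case=> -> -> ->; rewrite /f2 addr0 expr0n addr0. Qed.

Lemma f1_real_ge0 u y1 y2 :
  u \is Num.real -> y1 \is Num.real -> y2 \is Num.real -> 0 <= f1 u y1 y2.
Proof. by move=> Ru Ry1 Ry2; rewrite addr_ge0 // -realEsqr ?rpredB. Qed.

Lemma f2_real_ge0 u y1 y2 :
  u \is Num.real -> y1 \is Num.real -> y2 \is Num.real -> 0 <= f2 u y1 y2.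
Proof. by move=> Ru Ry1 Ry2; rewrite addr_ge0 // -realEsqr ?rpredD. Qed.

Lemma HC_F_Zset u y1 y2 r1 r2 : HC_F u y1 y2 r1 r2 -> Zset u y1 y2.
Proof.
case=> nz0 f1E f2E form0; split.
  move=> base0; apply: nz0; split; try by case: base0.
  - by apply/eqP; rewrite -sqrf_eq0 -f1E f1_eq0.
  - by apply/eqP; rewrite -sqrf_eq0 -f2E f2_eq0.
by rewrite hZ_hc_resultant f1E f2E hc_resultant_sqr [hc_form _ _ _ r1 r2]form0 !mul0r.
Qed.

Lemma Zset_scale l u y1 y2 :
  l != 0 -> Zset u y1 y2 -> Zset (l * u) (l * y1) (l * y2).
Proof.
move=> l0 [nz0 hZ0]; split; last by rewrite hZ_scale hZ0 mulr0.
have cancel_l x : l * x = 0 -> x = 0.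
  by move/eqP; rewrite mulf_eq0 (negPf l0) => /eqP.
by case=> /cancel_l u0 /cancel_l y10 /cancel_l y20; apply: nz0.
Qed.

Lemma Zset_lift u y1 y2 :
  Zset u y1 y2 ->
  exists r1 r2, HC_F u y1 y2 r1 r2 /\
    ([/\ u \is Num.real, y1 \is Num.real & y2 \is Num.real] ->
     r1 \is Num.real /\ r2 \is Num.real).
Proof.
move=> [nz0 hZ0]; set s1 := sqrtC (f1 u y1 y2); set s2 := sqrtC (f2 u y1 y2).
have [f1E f2E] : f1 u y1 y2 = s1 ^+ 2 /\ f2 u y1 y2 = s2 ^+ 2 by rewrite !sqrtCK.
move: hZ0; rewrite hZ_hc_resultant f1E f2E => /hc_resultant_sqr_eq0_sign[b1 [b2 form0]].
exists ((-1) ^+ b1 * s1), ((-1) ^+ b2 * s2); split.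
  split=> //; rewrite ?exprMn ?sqrr_sign ?mul1r //.
  by move=> [u0 y10 y20 _ _]; apply: nz0.
have sign_real (b : bool) : (-1) ^+ b \is @Num.real C by rewrite rpredX ?rpredN1.
case=> Ru Ry1 Ry2; split; rewrite realM ?sign_real ?sqrtC_real //.
- exact: f1_real_ge0.
- exact: f2_real_ge0.
Qed.

End Projection.

Theorem lemma8p1 (C : numClosedFieldType) (v11 v12 v21 v22 d : C) :
  ~ [/\ v11 = 0, v12 = 0, v21 = 0, v22 = 0 & d = 0] ->
  (* rho is well defined as a map HC_F(v,d) -> Z(v,d) *)
  (forall u y1 y2 r1 r2 : C,
      HC_F v11 v12 v21 v22 d u y1 y2 r1 r2 -> Zset v11 v12 v21 v22 d u y1 y2)
  (* rho is surjective: every point [u,y1,y2] of Z is the image of a point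
     [l u, l y1, l y2, r1, r2] of HC_F *)
  /\ (forall u y1 y2 : C, Zset v11 v12 v21 v22 d u y1 y2 ->
      exists l r1 r2 : C, l != 0 /\
        HC_F v11 v12 v21 v22 d (l * u) (l * y1) (l * y2) r1 r2)
  (* real case: real points of Z are images of real points of HC_F *)
  /\ ([/\ v11 \is Num.real, v12 \is Num.real, v21 \is Num.real,
          v22 \is Num.real & d \is Num.real] ->
      forall u y1 y2 : C, Zset v11 v12 v21 v22 d u y1 y2 ->
      real_point3 u y1 y2 ->
      exists l r1 r2 : C, l != 0 /\
        HC_F v11 v12 v21 v22 d (l * u) (l * y1) (l * y2) r1 r2 /\
        [/\ l * u \is Num.real, l * y1 \is Num.real, l * y2 \is Num.real,
            r1 \is Num.real & r2 \is Num.real]).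
Proof.
move=> _; split; [|split].
- exact: HC_F_Zset.
- move=> u y1 y2 Zu; have [r1 [r2 [HC _]]] := Zset_lift Zu.
  by exists 1, r1, r2; rewrite oner_neq0 !mul1r.
- move=> _ u y1 y2 Zu [mu [mu0 [Ru Ry1 Ry2]]].
  have [r1 [r2 [HC real_r]]] := Zset_lift (Zset_scale mu0 Zu).
  have [Rr1 Rr2] := real_r (And3 Ru Ry1 Ry2).
  by exists mu, r1, r2.
Qed.
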